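(* Let $G$ be a connected graph and let $v \in V(G)$. Then (1) $\left\lceil \frac{\tau(G)+1}{2} \right\rceil \le \tau(v) \le \tau(G)$; (2) there are at most $\left\lceil \frac{\tau(G)}{2} \right\rceil$ distinct terms in the detour sequence of $G$.
   Context: All graphs are finite and simple. The order of a path is its number of vertices. For a vertex $v$ of a graph $G$, the detour order $\tau(v)=\tau_G(v)$ is the order of a longest path in $G$ having $v$ as an endvertex. The detour order $\tau(G)$ of $G$ is the maximum of $\tau(v)$ over $v\in V(G)$, i.e. the order of a longest path in $G$. The detour sequence of $G$ is the nondecreasing sequence formed by the values $\tau(v)$, $v \in V(G)$ (one term per vertex). *)

From mathcomp Require Import all_boot.
Set Implicit Arguments. Unset Strict Implicit. Unset Printing Implicit Defensive.

Definition simple_graph (T : finType) (e : rel T) : Prop :=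
  symmetric e /\ irreflexive e.

Definition connected_graph (T : finType) (e : rel T) : Prop :=
  forall x y : T, connect e x y.

(* A path (list of vertices, pairwise distinct, consecutive ones adjacent),
   nonempty; its order is its number of vertices (size). *)
Definition is_gpath (T : finType) (e : rel T) (s : seq T) : bool :=
  match s with
  | [::] => false
  | x :: s' => path e x s' && uniq s
  end.

Definition has_endvertex (T : finType) (v : T) (s : seq T) : bool :=
  match s with
  | [::] => false
  | x :: s' => (x == v) || (last x s' == v)
  end.

(* tau(v): the order of a longest path having v as an endvertex.
   Paths have at most #|T| vertices, so we maximise over orders n <= #|T|. *)
Definition detour_v (T : finType) (e : rel T) (v : T) : nat :=
  \max_(n < #|T|.+1 | [exists t : n.-tuple T,
                         is_gpath e t && has_endvertex v t]) n.

Definition detour_order (T : finType) (e : rel T) : nat :=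
  \max_(n < #|T|.+1 | [exists t : n.-tuple T, is_gpath e t]) n.

Definition detour_sequence (T : finType) (e : rel T) : seq nat :=
  sort leq [seq detour_v e x | x <- enum T].

Definition num_distinct (s : seq nat) : nat := size (undup s).

From mathcomp Require Import all_boot zify.
Set Implicit Arguments. Unset Strict Implicit. Unset Printing Implicit Defensive.

(* Let P be a longest path, of order tau(G). By connectivity some path Q runs
   from v to a vertex u of P and meets P only at u. The vertex u splits P into
   two subpaths ending at u whose orders add up to tau(G) + 1, so one of them
   has order at least ceil((tau(G)+1)/2); appending it to Q gives a path with
   endvertex v at least that long. Hence every term of the detour sequence lies
   in an interval of ceil(tau(G)/2) integers. *)

Lemma num_distinct_in_range (s : seq nat) (lo hi : nat) :
  all (fun n => lo <= n <= hi) s -> num_distinct s <= hi.+1 - lo.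
Proof.
move=> /allP s_range; rewrite -(size_iota lo (hi.+1 - lo)).
apply: uniq_leq_size; first exact: undup_uniq.
move=> n; rewrite mem_undup mem_iota => /s_range /andP[lo_n n_hi].
by rewrite lo_n /=; lia.
Qed.

Section PathsToPredicate.
Variables (T : eqType) (e : rel T) (a : pred T).

Lemma path_to_pred_first (v : T) (p : seq T) :
  path e v p -> a (last v p) ->
  exists q, [/\ path e v q, a (last v q) &
                {in v :: q, forall z, a z -> z = last v q}].
Proof.
elim: p v => [|y p IHp] v /=.
  by move=> _ av; exists [::]; split=> // z; rewrite inE => /eqP.
case/andP=> evy y_p a_last; have [av | nav] := boolP (a v).
  by exists [::]; split=> // z; rewrite inE => /eqP.
have [q [y_q a_q first_q]] := IHp y y_p a_last.
exists (y :: q); split=> //=; first by rewrite evy.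
by move=> z; rewrite inE => /predU1P[-> /(negP nav) | /first_q].
Qed.

Lemma path_to_pred_uniq (v : T) (p : seq T) :
  path e v p -> a (last v p) ->
  exists q, [/\ path e v q, uniq (v :: q), a (last v q) &
                {in v :: q, forall z, a z -> z = last v q}].
Proof.
move=> v_p a_last; have [q [v_q a_q first_q]] := path_to_pred_first v_p a_last.
case: (shortenP v_q) a_q first_q => q' v_q' uniq_q' sub_q' a_q' first_q.
exists q'; split=> // z z_q'; apply: first_q.
by move: z_q'; rewrite !inE => /predU1P[-> | /sub_q' ->]; rewrite ?eqxx ?orbT.
Qed.

End PathsToPredicate.

Section PathSplitting.
Variables (T : eqType) (e : rel T).
Hypothesis e_sym : symmetric e.

Lemma long_subpath_from (x u : T) (p : seq T) :
  path e x p -> uniq (x :: p) -> u \in x :: p ->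
  exists b, [/\ path e u b, uniq (u :: b), {subset b <= x :: p} &
                uphalf (size p) <= size b].
Proof.
move=> x_p uniq_p u_in; case/splitPl: u_in x_p uniq_p => p1 p2 last_p1.
have split_at_u : x :: p1 ++ p2 = belast x p1 ++ u :: p2.
  by rewrite -cat_cons lastI last_p1 cat_rcons.
rewrite cat_path last_p1 => /andP[x_p1 u_p2].
rewrite {1}split_at_u cat_uniq => /and3P[uniq_p1 /norP[u_notin_p1 _] uniq_p2].
have sub_p2 : {subset p2 <= x :: p1 ++ p2}.
  by move=> z z_p2; rewrite split_at_u mem_cat inE z_p2 !orbT.
have sub_p1 : {subset rev (belast x p1) <= x :: p1 ++ p2}.
  by move=> z; rewrite mem_rev split_at_u mem_cat => ->.
have u_p1 : path e u (rev (belast x p1)).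
  by rewrite -last_p1 rev_path (eq_path (e' := e)) // => z y; rewrite e_sym.
have uniq_rp1 : uniq (u :: rev (belast x p1)) by rewrite /= mem_rev u_notin_p1 rev_uniq.
have [le_12 | lt_21] := leqP (size p1) (size p2).
  by exists p2; split=> //; rewrite uphalfE size_cat; lia.
by exists (rev (belast x p1)); split=> //; rewrite uphalfE size_rev size_belast size_cat; lia.
Qed.

End PathSplitting.

Section Detour.
Variables (T : finType) (e : rel T).

Lemma gpath_size_le_card (s : seq T) : is_gpath e s -> size s <= #|T|.
Proof. by case: s => [|x s] // /andP[_ /card_uniqP <-]; apply: max_card. Qed.

Lemma gpath_size_le_detour_v (v : T) (s : seq T) :
  is_gpath e s -> has_endvertex v s -> size s <= detour_v e v.
Proof.
move=> s_gpath v_end; have s_small : size s < #|T|.+1 by rewrite ltnS gpath_size_le_card.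
apply: (@leq_bigmax_cond _ _ (fun n : 'I_#|T|.+1 => nat_of_ord n) (Ordinal s_small)).
by apply/existsP; exists (in_tuple s); rewrite s_gpath v_end.
Qed.

Lemma detour_v_le_order (v : T) : detour_v e v <= detour_order e.
Proof.
apply/bigmax_leqP => n /existsP[t /andP[t_gpath _]].
apply: (@leq_bigmax_cond _ _ (fun n : 'I_#|T|.+1 => nat_of_ord n) n).
by apply/existsP; exists t.
Qed.

Lemma longest_gpath_exists (v : T) :
  exists x p, [/\ path e x p, uniq (x :: p) & size (x :: p) = detour_order e].
Proof.
have one_small : 1 < #|T|.+1 by rewrite ltnS; apply/card_gt0P; exists v.
pose has_gpath (n : 'I_#|T|.+1) := [exists t : n.-tuple T, is_gpath e t].
have gpath1 : has_gpath (Ordinal one_small) by apply/existsP; exists (in_tuple [:: v]).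
rewrite /detour_order (bigmax_eq_arg _ gpath1); case: arg_maxnP => // n.
by case/existsP=> -[[|x p] //= /eqP size_p] /andP[x_p uniq_p] _; exists x, p; rewrite size_p.
Qed.

Lemma detour_v_lower_bound (v : T) :
  symmetric e -> connected_graph e -> (detour_order e).+2./2 <= detour_v e v.
Proof.
move=> e_sym e_conn; have [x [p [x_p uniq_p <-]]] := longest_gpath_exists v.
have [r v_r x_last] := connectP (e_conn v x).
have x_reached : last v r \in x :: p by rewrite -x_last mem_head.
have [q [v_q uniq_q u_in first_q]] :=
  path_to_pred_uniq (a := fun z => z \in x :: p) v_r x_reached.
have [b [u_b uniq_b sub_b size_b]] := long_subpath_from e_sym x_p uniq_p u_in.
have q_b_disjoint : ~~ has (mem (v :: q)) b.
  apply/hasPn=> z z_b; apply/negP=> z_q.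
  by move: uniq_b; rewrite /= -(first_q z z_q (sub_b z z_b)) z_b.
have q_b_gpath : is_gpath e (v :: q ++ b).
  apply/andP; split; first by rewrite cat_path v_q u_b.
  by rewrite -cat_cons cat_uniq uniq_q q_b_disjoint; case/andP: uniq_b.
have v_end : has_endvertex v (v :: q ++ b) by rewrite /= eqxx.
apply: leq_trans (gpath_size_le_detour_v q_b_gpath v_end).
by rewrite /= size_cat ltnS (leq_trans size_b) // leq_addl.
Qed.

End Detour.

Theorem lemma1p4 (T : finType) (e : rel T) (v : T) :
  simple_graph e -> connected_graph e ->
  ((detour_order e).+2./2 <= detour_v e v <= detour_order e) /\
  num_distinct (detour_sequence e) <= (detour_order e).+1./2.
Proof.
move=> [e_sym _] e_conn.
have detour_range w : (detour_order e).+2./2 <= detour_v e w <= detour_order e.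
  by rewrite detour_v_lower_bound // detour_v_le_order.
split=> //; apply: leq_trans (num_distinct_in_range _) _.
- by apply/allP=> n; rewrite mem_sort => /mapP[w _ ->]; apply: detour_range.
- by lia.
Qed.
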